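(* $\Theta_t \cong \Gamma_t$ (as graphs).
   Context: $\mathcal{M}_{2n}$ is the set of perfect matchings of $K_{2n}$ and $\mathcal{M}_{2n-1}$ the set of near-perfect matchings of $K_{2n-1}$ (matchings with $n-1$ edges). $\Gamma_t$ is the graph on $\mathcal{M}_{2n}$ in which $m,m'$ are adjacent iff $|m\cap m'|<t$. For $m,m'\in\mathcal{M}_{2n-1}$, the multigraph union $m\cup m'$ is a disjoint union of even cycles (a common edge counting as a cycle of length $2$) and exactly one path with an even number of edges (possibly a single vertex, when $m,m'$ leave the same vertex unmatched); $d'(m,m')\vdash 2n-1$ is the partition whose parts are the numbers of vertices of these components (so each cycle of length $2k$ gives a part $2k$ and the path with $\ell$ edges gives the unique odd part $\ell+1$). $\Theta_t$ is the graph on $\mathcal{M}_{2n-1}$ in which $m,m'$ are adjacent iff $d'(m,m')$ has fewer than $t$ parts of size at most $2$. *)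

From mathcomp Require Import all_boot.
Set Implicit Arguments. Unset Strict Implicit. Unset Printing Implicit Defensive.

Definition is_matching (k : nat) (m : {set {set 'I_k}}) : bool :=
  [forall e in m, #|e| == 2] &&
  [forall e in m, forall e' in m, (e != e') ==> [disjoint e & e']].

Definition PM (n : nat) : finType :=
  {m : {set {set 'I_(2 * n)}} | is_matching m && (#|m| == n)}.

Definition NPM (n : nat) : finType :=
  {m : {set {set 'I_(2 * n - 1)}} | is_matching m && (#|m| == n - 1)}.

Definition union_rel (k : nat) (m m' : {set {set 'I_k}}) : rel 'I_k :=
  fun x y => [set x; y] \in m :|: m'.

Definition components (k : nat) (r : rel 'I_k) : {set {set 'I_k}} :=
  [set [set y | connect r x y] | x : 'I_k].

Definition dprime (n : nat) (m m' : NPM n) : seq nat :=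
  sort geq [seq #|C : {set 'I_(2 * n - 1)}| | C <- enum (components (union_rel (val m) (val m')))].

Definition Gamma (n t : nat) : rel (PM n) :=
  fun m m' => #|val m :&: val m'| < t.

Definition Theta (n t : nat) : rel (NPM n) :=
  fun m m' => count (fun p => p <= 2) (dprime m m') < t.

Arguments Gamma n t : clear implicits.
Arguments Theta n t : clear implicits.

Definition graph_iso (V W : finType) (a : rel V) (b : rel W) : Prop :=
  exists f : V -> W, bijective f /\ forall x y, a x y = b (f x) (f y).

From mathcomp Require Import all_boot zify.
Set Implicit Arguments. Unset Strict Implicit. Unset Printing Implicit Defensive.

(* Complete a near-perfect matching m of K_{2n-1} to the perfect matching of
   K_{2n} that joins its uncovered vertex to the new vertex 2n-1; this is a
   bijection.  The components of m ∪ m' with at most two vertices are the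
   common edges of m and m', together with the common uncovered vertex when
   there is one (a component of size 2 that is not a common edge would leave
   two vertices uncovered).  These correspond exactly to the common edges of
   the completed perfect matchings, so the bijection carries Theta_t onto
   Gamma_t. *)

Lemma count_enum_set (T : finType) (A : {set T}) (p : pred T) :
  count p (enum A) = #|[set x in A | p x]|.
Proof.
have -> : [set x in A | p x] = A :&: [set x | p x] by apply/setP => x; rewrite !inE.
by rewrite cardE (perm_size (enum_setI _ _)) size_filter; apply: eq_count => x; rewrite inE.
Qed.

Section Matchings.

Variable k : nat.
Implicit Types (m : {set {set 'I_k}}) (e : {set 'I_k}) (r : rel 'I_k).

Lemma is_matchingP m :
  reflect ((forall e, e \in m -> #|e| = 2) /\
           {in m &, forall e e', e != e' -> [disjoint e & e']})
          (is_matching m).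
Proof.
apply: (iffP andP) => [[/forall_inP card2 /forall_inP disj] | [card2 disj]].
  by split=> [e /card2 /eqP | e e' /disj /forall_inP d /d /implyP].
split; first by apply/forall_inP => e /card2 ->.
by apply/forall_inP => e he; apply/forall_inP => e' he'; apply/implyP; apply: disj.
Qed.

Lemma matching_card2 m e : is_matching m -> e \in m -> #|e| = 2.
Proof. by case/is_matchingP => card2 _ /card2. Qed.

Lemma matching_disjoint m e e' :
  is_matching m -> e \in m -> e' \in m -> e != e' -> [disjoint e & e'].
Proof. by case/is_matchingP => _; apply. Qed.

Lemma matching_edge_eq m e e' x :
  is_matching m -> e \in m -> e' \in m -> x \in e -> x \in e' -> e = e'.
Proof.
move=> mm em e'm xe xe'; apply/eqP; apply: contraTT isT => ee'.
by move/disjoint_setI0/setP/(_ x): (matching_disjoint mm em e'm ee'); rewrite !inE xe xe'.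
Qed.

Lemma card_cover_matching m : is_matching m -> #|cover m| = 2 * #|m|.
Proof.
move=> mm; have /eqP <- : trivIset m.
  by apply/trivIsetP => e e' em e'm; apply: (matching_disjoint mm).
by rewrite (eq_bigr (fun=> 2)) => [|e /(matching_card2 mm)//]; rewrite sum_nat_const mulnC.
Qed.

Lemma card2_set2 e x : #|e| = 2 -> x \in e -> exists2 y, y != x & e = [set x; y].
Proof.
move=> /eqP/cards2P [a [b [ab ->]]]; rewrite !inE => /orP [] /eqP ->.
  by exists b; rewrite // eq_sym.
by exists a; rewrite // setUC.
Qed.

Definition uncovered m := ~: cover m.

Definition completion m := m :|: [set [set x] | x in uncovered m].

Definition component r x := [set y | connect r x y].

Lemma component_isolated r x : (forall y, ~~ r x y) -> component r x = [set x].
Proof.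
move=> isolated; apply/setP => y; rewrite !inE; apply/idP/eqP => [|<-]; last exact: connect0.
by case/connectP => [[|z p] /=]; [move=> _ -> | rewrite (negbTE (isolated z))].
Qed.

Lemma union_relC m m' : union_rel m m' = union_rel m' m.
Proof. by rewrite /union_rel setUC. Qed.

Lemma union_rel_sym m m' : symmetric (union_rel m m').
Proof. by move=> x y; rewrite /union_rel setUC. Qed.

Lemma union_rel_uncovered m m' x :
  x \in uncovered m -> x \in uncovered m' -> forall y, ~~ union_rel m m' x y.
Proof.
rewrite !inE => xm xm' y; rewrite /union_rel inE.
apply/norP; split; [apply: contra xm | apply: contra xm'] => ?.
  by apply/bigcupP; exists [set x; y]; rewrite ?setU11.
by apply/bigcupP; exists [set x; y]; rewrite ?setU11.
Qed.

Lemma common_edge_component m m' e x :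
  is_matching m -> is_matching m' -> e \in m -> e \in m' -> x \in e ->
  component (union_rel m m') x = e.
Proof.
move=> mm mm' em em' xe.
have [y _ exy] := card2_set2 (matching_card2 mm em) xe.
have e_closed : closed (union_rel m m') (mem e).
  apply: intro_closed; first exact/sym_connect_sym/union_rel_sym.
  move=> a b; rewrite /union_rel inE => /orP [] abm ae.
    by rewrite -(matching_edge_eq mm abm em (setU11 a _) ae) setU1r ?set11.
  by rewrite -(matching_edge_eq mm' abm em' (setU11 a _) ae) setU1r ?set11.
apply/setP => z; rewrite inE; apply/idP/idP => [/(closed_connect e_closed) <- //|].
rewrite exy => /set2P [] ->; first exact: connect0.
by apply: connect1; rewrite /union_rel inE -exy em.
Qed.

Lemma small_component_common_edge m m' e x :
  is_matching m -> is_matching m' -> #|uncovered m'| <= 1 ->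
  e \in m -> x \in e -> #|component (union_rel m m') x| <= 2 -> e \in m'.
Proof.
move=> mm mm' unc1 em xe small.
set r := union_rel m m'.
have [y yx exy] := card2_set2 (matching_card2 mm em) xe.
have comp_e : component r x = e.
  apply/esym/eqP; rewrite eqEcard (matching_card2 mm em) small andbT exy.
  apply/subsetP => z /set2P [] ->; rewrite inE ?connect0 //.
  by apply: connect1; rewrite /r /union_rel inE -exy em.
apply: contraT => e'm'.
(* Otherwise both ends of [e] would be left uncovered by [m']. *)
have e_uncovered : e \subset uncovered m'.
  apply/subsetP => v ve; rewrite inE; apply/bigcupP => [[f fm' vf]].
  have [z _ fvz] := card2_set2 (matching_card2 mm' fm') vf.
  have : z \in component r x.
    have rvz : r v z by rewrite /r /union_rel inE -fvz fm' orbT.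
    by move: ve; rewrite -comp_e !inE => /connect_trans; apply; apply: connect1.
  rewrite comp_e => ze; move: e'm'; suff -> : e = f by rewrite fm'.
  apply/esym/eqP; rewrite eqEcard (matching_card2 mm em) (matching_card2 mm' fm') leqnn andbT.
  by rewrite fvz subUset !sub1set ve ze.
by move: (subset_leq_card e_uncovered); rewrite (matching_card2 mm em) => /leq_trans/(_ unc1).
Qed.

Lemma completion_disjoint m d d' :
  is_matching m -> d \in completion m -> d' \in completion m -> d != d' -> [disjoint d & d'].
Proof.
move=> mm /setUP [dm | /imsetP [x xu ->]] /setUP [d'm | /imsetP [y yu ->]] dd'.
- exact: matching_disjoint mm dm d'm dd'.
- rewrite disjoint_sym disjoints1; apply: contraTN yu => yd.
  by rewrite inE negbK; apply/bigcupP; exists d.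
- rewrite disjoints1; apply: contraTN xu => xd'.
  by rewrite inE negbK; apply/bigcupP; exists d'.
- by rewrite disjoints1 inE; apply: contraNN dd' => /eqP ->.
Qed.

Lemma small_components_union m m' :
  is_matching m -> is_matching m' -> #|uncovered m| <= 1 -> #|uncovered m'| <= 1 ->
  [set C in components (union_rel m m') | #|C| <= 2] = completion m :&: completion m'.
Proof.
move=> mm mm' unc1 unc1'.
apply/setP => C; rewrite !inE; apply/andP/andP => [[/imsetP [x _ ->] small] | []].
  rewrite -/(component _ x) in small *.
  have [/bigcupP [e em xe] | xm] := boolP (x \in cover m).
    have em' := small_component_common_edge mm mm' unc1' em xe small.
    by rewrite (common_edge_component mm mm' em em' xe) em em'.
  have [/bigcupP [e em' xe] | xm'] := boolP (x \in cover m').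
    rewrite union_relC in small *.
    have em := small_component_common_edge mm' mm unc1 em' xe small.
    by rewrite (common_edge_component mm' mm em' em xe) em em'.
  have [xu xu'] : x \in uncovered m /\ x \in uncovered m' by rewrite !inE xm xm'.
  rewrite component_isolated; last exact: union_rel_uncovered xu xu'.
  by split; apply/orP; right; apply: imset_f.
case/orP => [Cm | /imsetP [x xu ->]]; case/orP => [Cm' | /imsetP [x' xu' eqx]].
- have [x xC] : exists x, x \in C by apply/card_gt0P; rewrite (matching_card2 mm Cm).
  split; last by rewrite (matching_card2 mm Cm).
  by rewrite -(common_edge_component mm mm' Cm Cm' xC) imset_f.
- by move: (matching_card2 mm Cm); rewrite eqx cards1.
- by move: (matching_card2 mm' Cm'); rewrite cards1.
- move/set1_inj: eqx => eqx; rewrite -eqx in xu'; split; last by rewrite cards1.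
  by rewrite -(component_isolated (union_rel_uncovered xu xu')) imset_f.
Qed.

Lemma count_small_parts m m' :
  is_matching m -> is_matching m' -> #|uncovered m| <= 1 -> #|uncovered m'| <= 1 ->
  count (fun p => p <= 2)
    (sort geq [seq #|C : {set 'I_k}| | C <- enum (components (union_rel m m'))])
  = #|completion m :&: completion m'|.
Proof.
move=> mm mm' unc1 unc1'.
rewrite -(small_components_union mm mm' unc1 unc1') -count_enum_set.
by rewrite (permP (permEl (perm_sort _ _))) count_map.
Qed.

End Matchings.

Section Extension.

Variable k : nat.
Implicit Types (m : {set {set 'I_k}}) (e : {set 'I_k}).
Implicit Types (M : {set {set 'I_k.+1}}) (E : {set 'I_k.+1}).

Definition extend_edge e : {set 'I_k.+1} :=
  if #|e| == 1 then ord_max |: (lift ord_max @: e) else lift ord_max @: e.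

Definition restrict_edge E : {set 'I_k} := lift ord_max @^-1: E.

Definition extend m := [set extend_edge e | e in completion m].

Definition restrict M := restrict_edge @: [set E in M | ord_max \notin E].

Lemma max_notin_lift e : ord_max \notin lift ord_max @: e.
Proof. by apply/imsetP => [[i _ /eqP]]; rewrite (negbTE (neq_lift _ _)). Qed.

Lemma mem_lift_imset e i : (lift ord_max i \in lift ord_max @: e) = (i \in e).
Proof. by rewrite mem_imset //; exact: lift_inj. Qed.

Lemma card_lift_imset e : #|lift ord_max @: e| = #|e|.
Proof. by rewrite card_imset //; exact: lift_inj. Qed.

Lemma mem_lift_extend_edge e i : (lift ord_max i \in extend_edge e) = (i \in e).
Proof.
rewrite /extend_edge; case: ifP => _; rewrite ?inE ?mem_lift_imset //.
by rewrite eq_sym (negbTE (neq_lift _ _)).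
Qed.

Lemma max_in_extend_edge e : (ord_max \in extend_edge e) = (#|e| == 1).
Proof.
by rewrite /extend_edge; case: ifP => _; rewrite ?setU11 // (negbTE (max_notin_lift e)).
Qed.

Lemma card_extend_edge e : #|extend_edge e| = #|e| + (#|e| == 1).
Proof.
rewrite /extend_edge; case: ifP => [/eqP e1 | _]; last by rewrite card_lift_imset addn0.
by rewrite cardsU1 max_notin_lift card_lift_imset e1.
Qed.

Lemma restrict_extend_edge : cancel extend_edge restrict_edge.
Proof. by move=> e; apply/setP => i; rewrite inE mem_lift_extend_edge. Qed.

Lemma extend_edge_inj : injective extend_edge.
Proof. exact: can_inj restrict_extend_edge. Qed.

Lemma card_extendI m m' : #|extend m :&: extend m'| = #|completion m :&: completion m'|.
Proof.
rewrite -imsetI ?card_imset //; first exact: extend_edge_inj.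
by move=> e e' _ _; apply: extend_edge_inj.
Qed.

Lemma extend_edge_disjoint e e' :
  [disjoint e & e'] -> ~~ ((#|e| == 1) && (#|e'| == 1)) ->
  [disjoint extend_edge e & extend_edge e'].
Proof.
move=> ee' not_both; rewrite -setI_eq0; apply/eqP/setP => z; rewrite !inE.
case: (unliftP ord_max z) => [i -> | ->]; last by rewrite !max_in_extend_edge; apply/negbTE.
by rewrite !mem_lift_extend_edge; move/disjoint_setI0/setP/(_ i): ee'; rewrite !inE.
Qed.

Lemma lift_restrict_edge E : ord_max \notin E -> lift ord_max @: restrict_edge E = E.
Proof.
move=> maxE; apply/setP => z; case: (unliftP ord_max z) => [i -> | ->].
  by rewrite mem_lift_imset inE.
by rewrite (negbTE (max_notin_lift _)) (negbTE maxE).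
Qed.

Lemma card_restrict_edge E : ord_max \notin E -> #|restrict_edge E| = #|E|.
Proof. by move=> maxE; rewrite -{2}(lift_restrict_edge maxE) card_lift_imset. Qed.

Lemma extend_restrict_edge E :
  ord_max \notin E -> #|E| = 2 -> extend_edge (restrict_edge E) = E.
Proof. by move=> maxE E2; rewrite /extend_edge card_restrict_edge // E2 lift_restrict_edge. Qed.

Lemma restrict_extend m : is_matching m -> restrict (extend m) = m.
Proof.
move=> mm; apply/setP => e; apply/imsetP/idP => [[E] | em].
  rewrite inE => /andP [/imsetP [d dm ->] maxd] ->; rewrite restrict_extend_edge.
  move: dm maxd; rewrite max_in_extend_edge inE => /orP [// | /imsetP [x _ ->]].
  by rewrite cards1.
exists (extend_edge e); last by rewrite restrict_extend_edge.
by rewrite inE imset_f ?inE ?em // max_in_extend_edge (matching_card2 mm em).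
Qed.

End Extension.

Section NearPerfect.

Variables k n : nat.
Hypothesis size_k : k.+1 = 2 * n.
Implicit Types (m : {set {set 'I_k}}) (M : {set {set 'I_k.+1}}).

Lemma card_uncovered_near_perfect m :
  is_matching m -> #|m| = n - 1 -> #|uncovered m| = 1.
Proof.
move=> mm cm; have := cardsC (cover m).
by rewrite card_ord card_cover_matching // cm -/(uncovered m); lia.
Qed.

Lemma card_completion m : is_matching m -> #|m| = n - 1 -> #|completion m| = n.
Proof.
move=> mm cm; rewrite cardsU card_imset; last exact: set1_inj.
have -> : m :&: [set [set x] | x in uncovered m] = set0.
  apply/setP => e; rewrite !inE; apply/negbTE/andP => [[em /imsetP [x _ ex]]].
  by move: (matching_card2 mm em); rewrite ex cards1.
by rewrite cards0 cm card_uncovered_near_perfect //; lia.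
Qed.

Lemma extend_perfect m :
  is_matching m -> #|m| = n - 1 -> is_matching (extend m) && (#|extend m| == n).
Proof.
move=> mm cm; rewrite card_imset ?card_completion ?eqxx ?andbT //; last exact: extend_edge_inj.
have [u uncE] : exists u, uncovered m = [set u].
  by apply/cards1P; rewrite card_uncovered_near_perfect.
have singletonE d : d \in completion m -> #|d| == 1 -> d = [set u].
  case/setUP => [dm | ]; first by rewrite (matching_card2 mm dm).
  by rewrite uncE imset_set1 inE => /eqP.
apply/is_matchingP; split=> [_ /imsetP [d dm ->] |].
  rewrite card_extend_edge; have [/eqP -> // | ] := boolP (#|d| == 1).
  by case/setUP: dm => [/(matching_card2 mm) -> | /imsetP [x _ ->]]; rewrite ?cards1.
move=> _ _ /imsetP [d dm ->] /imsetP [d' d'm ->] neq.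
have dd' : d != d' by apply: contraNneq neq => ->.
apply: extend_edge_disjoint; first exact: completion_disjoint mm dm d'm dd'.
apply: contra dd' => /andP [d1 d'1].
by rewrite (singletonE _ dm d1) (singletonE _ d'm d'1).
Qed.

Lemma perfect_matching_max_edge M :
  is_matching M -> #|M| = n -> exists u, [set lift ord_max u; ord_max] \in M.
Proof.
move=> mM cM; have : ord_max \in cover M.
  suff /eqP -> : cover M == setT by rewrite inE.
  by rewrite eqEcard subsetT cardsT card_ord card_cover_matching // cM -size_k ltnSn.
case/bigcupP => E EM maxE.
have [z zmax Eeq] := card2_set2 (matching_card2 mM EM) maxE.
case: (unliftP ord_max z) => [u zu | zE]; last by rewrite zE eqxx in zmax.
by exists u; rewrite setUC -zu -Eeq.
Qed.

Section Restriction.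

Variables (M : {set {set 'I_k.+1}}) (u : 'I_k).
Hypotheses (mM : is_matching M) (cM : #|M| = n).
Hypothesis max_edge : [set lift ord_max u; ord_max] \in M.

Local Notation e0 := [set lift ord_max u; ord_max].

Lemma max_in_edge E : E \in M -> (ord_max \in E) = (E == e0).
Proof.
move=> EM; apply/idP/eqP => [maxE | ->]; last by rewrite !inE eqxx orbT.
by apply: matching_edge_eq mM EM max_edge maxE _; rewrite !inE eqxx orbT.
Qed.

Lemma edge_off_max E : E \in M :\ e0 -> ord_max \notin E /\ #|E| = 2.
Proof.
by case/setD1P => Ee0 EM; rewrite max_in_edge // Ee0 (matching_card2 mM EM).
Qed.

Lemma restrictE : restrict M = @restrict_edge k @: (M :\ e0).
Proof.
rewrite /restrict; suff -> : [set E in M | ord_max \notin E] = M :\ e0 by [].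
apply/setP => E; rewrite !inE; case EM: (E \in M); rewrite ?andbF //.
by rewrite max_in_edge // andbT.
Qed.

Lemma restrict_near_perfect : is_matching (restrict M) && (#|restrict M| == n - 1).
Proof.
have restrict_inj : {in M :\ e0 &, injective (@restrict_edge k)}.
  move=> E E' /edge_off_max [maxE _] /edge_off_max [maxE' _] eqE.
  by rewrite -(lift_restrict_edge maxE) -(lift_restrict_edge maxE') eqE.
have card_rest : #|M :\ e0| = n - 1.
  by move: (cardsD1 e0 M); rewrite max_edge cM add1n => ->; rewrite subn1.
rewrite restrictE card_in_imset // card_rest eqxx andbT.
apply/is_matchingP; split => [_ /imsetP [E /edge_off_max [maxE E2] ->] |].
  by rewrite card_restrict_edge.
move=> _ _ /imsetP [E EM ->] /imsetP [E' E'M ->] neq.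
have EE' : E != E' by apply: contraNneq neq => ->.
move: EM E'M; rewrite !inE => /andP [_ EM] /andP [_ E'M].
move/disjoint_setI0: (matching_disjoint mM EM E'M EE') => /setP disj.
by rewrite -setI_eq0; apply/eqP/setP => i; move: (disj (lift ord_max i)); rewrite !inE.
Qed.

Lemma uncovered_restrict : uncovered (restrict M) = [set u].
Proof.
have/andP [mR /eqP cR] := restrict_near_perfect.
have /cards1P [v uncE] := introT eqP (card_uncovered_near_perfect mR cR).
suff : u \in uncovered (restrict M) by rewrite uncE inE => /eqP ->.
rewrite inE restrictE; apply/bigcupP => [[_ /imsetP [E /setD1P [Ee0 EM] ->]]].
rewrite inE => uE; move/negP: Ee0; apply.
by apply/eqP/(matching_edge_eq mM EM max_edge uE); rewrite !inE eqxx.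
Qed.

Lemma extend_restrict : extend (restrict M) = M.
Proof.
rewrite /extend /completion uncovered_restrict imset_set1 imsetU imset_set1 restrictE.
rewrite -imset_comp (eq_in_imset (g := id)); last first.
  by move=> E /edge_off_max [maxE E2] /=; rewrite extend_restrict_edge.
have -> : extend_edge [set u] = e0.
  by rewrite /extend_edge cards1 eqxx imset_set1 setUC.
by rewrite imset_id setUC setD1K.
Qed.

End Restriction.

End NearPerfect.

(* [Theta n t] and [Gamma n t] are [Theta_on (2 * n - 1) n t] and
   [Gamma_on (2 * n) n t] by conversion; freeing the number of vertices lets
   it be written [k] and [k.+1]. *)
Definition near_perfect_on (k n : nat) : finType :=
  {m : {set {set 'I_k}} | is_matching m && (#|m| == n - 1)}.

Definition perfect_on (k n : nat) : finType :=
  {M : {set {set 'I_k}} | is_matching M && (#|M| == n)}.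

Definition Theta_on (k n t : nat) : rel (near_perfect_on k n) :=
  fun m m' => count (fun p => p <= 2)
    (sort geq [seq #|C : {set 'I_k}|
                 | C <- enum (components (union_rel (val m) (val m')))]) < t.

Definition Gamma_on (k n t : nat) : rel (perfect_on k n) :=
  fun M M' => #|val M :&: val M'| < t.

Arguments Theta_on : clear implicits.
Arguments Gamma_on : clear implicits.

Lemma graph_iso_Theta_Gamma_on k N n t :
  k.+1 = N -> N = 2 * n -> graph_iso (Theta_on k n t) (Gamma_on N n t).
Proof.
move=> <- size_k.
have extend_ok (m : near_perfect_on k n) :
    is_matching (extend (val m)) && (#|extend (val m)| == n).
  by case/andP: (valP m) => mm /eqP cm; apply: extend_perfect.
have restrict_ok (M : perfect_on k.+1 n) :
    is_matching (restrict (val M)) && (#|restrict (val M)| == n - 1) /\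
    extend (restrict (val M)) = val M.
  case/andP: (valP M) => mM /eqP cM.
  have [u max_edge] := perfect_matching_max_edge size_k mM cM.
  by rewrite (restrict_near_perfect mM cM max_edge) (extend_restrict size_k mM cM max_edge).
exists (fun m => Sub (extend (val m)) (extend_ok m) : perfect_on k.+1 n); split.
  exists (fun M => Sub (restrict (val M)) (restrict_ok M).1 : near_perfect_on k n).
    by move=> m; apply: val_inj; rewrite /= restrict_extend //; case/andP: (valP m).
  by move=> M; apply: val_inj; exact: (restrict_ok M).2.
move=> m m'; rewrite /Theta_on /Gamma_on /= card_extendI.
case/andP: (valP m) => mm /eqP cm; case/andP: (valP m') => mm' /eqP cm'.
by rewrite count_small_parts ?(card_uncovered_near_perfect size_k).
Qed.

Theorem mainTheorem12 (n t : nat) (hn : 0 < n) :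
  graph_iso (Theta n t) (Gamma n t).
Proof.
by apply: (@graph_iso_Theta_Gamma_on (2 * n - 1)); rewrite // subn1 prednK // muln_gt0.
Qed.
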